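(* Let $f:\mathbb{R}^n\to\mathbb{R}$ satisfy: (A1) $f\in C^\infty(\mathbb{R}^n)$; (A2) there is $M>0$ such that $f(x)>0$ for all $x\notin B(0,M)$; (A3) $\nabla f(p)\neq 0$ for every $p\in\mathcal{B}:=\{p\in\mathbb{R}^n: f(p)=0\}$, and assume $\mathcal{B}\neq\emptyset$. For $x\in\mathbb{R}^n$ let $d(x)=\min_{p\in\mathcal{B}}\|x-p\|$ and for $\sigma>0$ let $\Omega_\sigma=\{x\in\mathbb{R}^n: d(x)<\sigma\}$. Then for each angle $\alpha\in\left(-\frac{\pi}{4},\frac{\pi}{4}\right)$ there exists $\sigma>0$ such that for every $x\in\Omega_\sigma$ we have $\nabla f(x)\neq 0$, the set \[T(x)=\Big\{t\ge 0:\ x-t\,\mathrm{sgn}(f(x))\,\frac{\nabla f(x)}{\|\nabla f(x)\|}\in\mathcal{B}\Big\}\] is nonempty, and its smallest element $t(x)=\min T(x)$ satisfies \[ d(x)\le t(x)\le 2\cos(\alpha)\,d(x).\]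
   Context: $\|\cdot\|$ is the Euclidean norm, $B(x,r)$ is the open Euclidean ball of center $x$ and radius $r$, and $\mathrm{sgn}$ is the sign function (with $\mathrm{sgn}(0)=0$). Under (A1)–(A3), $\mathcal{B}$ is a compact smooth hypersurface of $\mathbb{R}^n$, so the minimum defining $d(x)$ is attained. *)

From HB Require Import structures.
From mathcomp Require Import all_boot all_order all_algebra.
From mathcomp Require Import all_classical all_reals all_analysis.
Set Implicit Arguments. Unset Strict Implicit. Unset Printing Implicit Defensive.
Import Order.TTheory GRing.Theory Num.Theory.
Import numFieldNormedType.Exports.
Local Open Scope classical_set_scope.
Local Open Scope ring_scope.

Section Defs.
Variables (R : realType) (n : nat).
Notation V := 'rV[R]_n.

(* Euclidean norm (the library norm on matrices is the sup norm). *)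
Definition enorm (x : V) : R := Num.sqrt (\sum_(i < n) (x ord0 i) ^+ 2).

Definition ebasis (i : 'I_n) : V := \row_(j < n) (i == j)%:R.

Fixpoint iter_deriv (vs : seq V) (f : V -> R) : V -> R :=
  match vs with
  | [::] => f
  | v :: vs' => fun x => 'D_v (iter_deriv vs' f) x
  end.

Definition smooth (f : V -> R) : Prop :=
  forall vs : seq 'I_n,
    continuous (iter_deriv (map ebasis vs) f) /\
    forall (i : 'I_n) (x : V), derivable (iter_deriv (map ebasis vs) f) x (ebasis i).

Definition grad (f : V -> R) (x : V) : V := \row_(i < n) 'D_(ebasis i) f x.

Definition zeroset (f : V -> R) : set V := [set p | f p = 0].

(* Distance to the zero set (a minimum under the hypotheses; defined as inf). *)
Definition dist_zero (f : V -> R) (x : V) : R :=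
  inf [set enorm (x - p) | p in zeroset f].

Definition Omega (f : V -> R) (sigma : R) : set V :=
  [set x | dist_zero f x < sigma].

Definition Tset (f : V -> R) (x : V) : set R :=
  [set t | 0 <= t /\
     zeroset f (x - (t * Num.sg (f x) / enorm (grad f x)) *: grad f x)].

End Defs.

From HB Require Import structures.
From mathcomp Require Import all_boot all_order all_algebra.
From mathcomp Require Import all_classical all_reals all_analysis.
From mathcomp Require Import ring lra.
Set Implicit Arguments. Unset Strict Implicit. Unset Printing Implicit Defensive.
Import Order.TTheory GRing.Theory Num.Theory.
Import numFieldNormedType.Exports.
Local Open Scope classical_set_scope.
Local Open Scope ring_scope.

(* Let B be the zero set of f: it is compact and the gradient does not vanish on it.
   By compactness there is r > 0 such that in every sup-norm box of radius r centred
   on B each partial derivative varies by at most kap |grad f z|, where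
   kap = 1 / (10 (n + 1)).  Let d(x) < r / 3 and let p in B be a nearest point.
   Expanding f to first order at p with the frozen gradient G = grad f x (one
   coordinate at a time, by the mean value theorem) gives an error of at most
   (9/40) |G| d(x), while sgn(f x) G.(x - p) <= |G| d(x) by Cauchy-Schwarz; hence f
   changes sign between x and x - (5/4) d(x) sgn(f x) G / |G|, and the intermediate
   value theorem yields t(x) <= (5/4) d(x) <= 2 cos(alpha) d(x), since
   cos(alpha) > 1 / sqrt 2.  Conversely d(x) <= t(x), because the point reached
   lies on B at distance at most t(x) from x. *)

Section Euclidean.
Variables (R : realType) (n : nat).
Notation V := 'rV[R]_n.
Implicit Types (x y a b : V).

Definition dotv a b : R := \sum_(i < n) a ord0 i * b ord0 i.

Lemma dotvC a b : dotv a b = dotv b a.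
Proof. by apply: eq_bigr => i _; rewrite mulrC. Qed.

Lemma dotvBr a x y : dotv a (x - y) = dotv a x - dotv a y.
Proof. by rewrite /dotv -sumrB; apply: eq_bigr => i _; rewrite !mxE mulrBr. Qed.

Lemma dotvZr a c x : dotv a (c *: x) = c * dotv a x.
Proof. by rewrite /dotv mulr_sumr; apply: eq_bigr => i _; rewrite !mxE mulrCA. Qed.

Lemma dotvv_ge0 x : 0 <= dotv x x.
Proof. by apply: sumr_ge0 => i _; rewrite -expr2 sqr_ge0. Qed.

Lemma enorm_ge0 x : 0 <= enorm x.
Proof. exact: sqrtr_ge0. Qed.

Lemma enorm_sqr x : enorm x ^+ 2 = dotv x x.
Proof.
rewrite /enorm sqr_sqrtr; last by apply: sumr_ge0 => i _; apply: sqr_ge0.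
by apply: eq_bigr => i _; rewrite expr2.
Qed.

Lemma coord_le_enorm x i : `|x ord0 i| <= enorm x.
Proof.
rewrite /enorm -sqrtr_sqr; apply: ler_wsqrtr.
by rewrite (bigD1 i) //= lerDl; apply: sumr_ge0 => j _; apply: sqr_ge0.
Qed.

Lemma enorm_eq0 x : (enorm x == 0) = (x == 0).
Proof.
apply/eqP/eqP => [x0|->].
  apply/rowP => i; rewrite mxE; apply/eqP; rewrite -normr_le0 -x0.
  exact: coord_le_enorm.
by rewrite /enorm big1 ?sqrtr0 // => i _; rewrite mxE expr0n.
Qed.

Lemma enorm0 : enorm (0 : V) = 0.
Proof. by apply/eqP; rewrite enorm_eq0. Qed.

Lemma enormZ c x : enorm (c *: x) = `|c| * enorm x.
Proof.
rewrite /enorm -sqrtr_sqr -sqrtrM ?sqr_ge0 // mulr_sumr.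
by congr Num.sqrt; apply: eq_bigr => i _; rewrite mxE exprMn.
Qed.

Lemma mx_norm_le_enorm x : `|x| <= enorm x.
Proof.
rewrite [leLHS]/Num.norm /= mx_normrE; apply: bigmax_le; first exact: enorm_ge0.
by move=> [i j] _; rewrite (ord1 i); apply: coord_le_enorm.
Qed.

Lemma coord_sub_le_enormD (p x y : V) i :
  `|y ord0 i - p ord0 i| <= enorm (x - p) + enorm (x - y).
Proof.
have -> : y ord0 i - p ord0 i = (x - p) ord0 i - (x - y) ord0 i by rewrite !mxE; ring.
by apply: le_trans (ler_normB _ _) _; rewrite lerD ?coord_le_enorm.
Qed.

Lemma dotv_le_enorm a b : dotv a b <= enorm a * enorm b.
Proof.
have [->|a0] := eqVneq a 0.
  by rewrite /dotv big1 ?mulr_ge0 ?enorm_ge0 // => i _; rewrite mxE mul0r.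
have [->|b0] := eqVneq b 0.
  by rewrite /dotv big1 ?mulr_ge0 ?enorm_ge0 // => i _; rewrite mxE mulr0.
set A := enorm a; set B := enorm b.
have AB0 : 0 < A * B by rewrite mulr_gt0 // lt0r enorm_ge0 enorm_eq0 ?a0 ?b0.
have := dotvv_ge0 (B *: a - A *: b).
rewrite !(dotvBr, dotvZr) ![dotv (_ - _) _]dotvC !(dotvBr, dotvZr).
rewrite -!enorm_sqr -/A -/B (dotvC b a); nra.
Qed.

Lemma enorm_continuous : continuous (@enorm R n).
Proof.
have sum_sqr_cont : continuous (fun x : V => \sum_(i < n) x ord0 i ^+ 2).
  apply: (@continuous_big _ _ +%R 0 xpredT add_continuous) => i _ x.
  apply: (@continuous_comp _ _ _ (fun y : V => y ord0 i) (fun r : R => r ^+ 2)).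
    exact: coord_continuous.
  exact: exprn_continuous.
move=> x; apply: (@continuous_comp _ _ _ _ Num.sqrt); first exact: sum_sqr_cont.
exact: sqrt_continuous.
Qed.

End Euclidean.

Section Box.
Variables (R : realType) (n : nat).
Notation V := 'rV[R]_n.

Definition box (p : V) (r : R) : set V :=
  [set w | forall i, `|w ord0 i - p ord0 i| < r].

Lemma ball_box (p : V) (r : R) : 0 < r -> ball p r = box p r.
Proof.
move=> r0; rewrite predeqE => w; split.
  by case=> _ pw i; have := pw ord0 i; rewrite -ball_normE /ball_ /= distrC.
by move=> pw; split=> // i j; rewrite (ord1 i) -ball_normE /ball_ /= distrC.
Qed.

Lemma box_convex (p a b : V) (r l : R) : box p r a -> box p r b -> 0 <= l <= 1 ->
  box p r (a + l *: (b - a)).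
Proof.
move=> pa pb /andP[l0 l1] i; rewrite !mxE.
have -> : a ord0 i + l * (b ord0 i - a ord0 i) - p ord0 i =
    (1 - l) * (a ord0 i - p ord0 i) + l * (b ord0 i - p ord0 i) by ring.
apply: le_lt_trans (ler_normD _ _) _.
rewrite !normrM (ger0_norm l0) ger0_norm ?subr_ge0 //.
have := pa i; have := pb i; have [->|l_neq1] := eqVneq l 1; first lra.
have : l < 1 by rewrite lt_neqAle l_neq1.
nra.
Qed.

Lemma enorm_box (p x : V) (r : R) :
  enorm (x - p) < r -> box p r x.
Proof.
by move=> xp i; apply: le_lt_trans xp; have := coord_le_enorm (x - p) i; rewrite !mxE.
Qed.

End Box.

Section Calculus.
Variables (R : realType) (n : nat).
Notation V := 'rV[R]_n.

Lemma is_derive_line (f : V -> R) (a v : V) (s : R) :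
  derivable f (a + s *: v) v ->
  is_derive s 1 (fun s : R => f (a + s *: v)) ('D_v f (a + s *: v)).
Proof.
move=> fv.
have line_quot : (fun h : R => h^-1 *: (((fun s => f (a + s *: v)) \o shift s) (h *: 1)
      - f (a + s *: v))) =
    (fun h : R => h^-1 *: ((f \o shift (a + s *: v)) (h *: v) - f (a + s *: v))).
  by apply: funext => h /=; rewrite [_%:A]mulr1 scalerDl addrCA.
by split; rewrite /derivable /derive line_quot.
Qed.

Lemma mvt_line (f : V -> R) (a v : V) (u : R) :
  (forall s : R, derivable f (a + s *: v) v) ->
  exists2 l : R, 0 <= l <= 1 &
    f (a + u *: v) - f a = u * 'D_v f (a + l *: (u *: v)).
Proof.
move=> fv; pose g (s : R) := f (a + (u * s) *: v).
have g' (c : R) : is_derive c 1 g ('D_v f (a + (u * c) *: v) * u).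
  apply: (@is_derive1_comp _ (fun s => f (a + s *: v)) ( *%R u)).
    exact: is_derive_line.
  by apply: is_derive_eq; rewrite [_%:A]mulr1.
have gc : {within `[0, 1], continuous g}.
  by apply: derivable_within_continuous => c _; case: (g' c).
have [c] := MVT ltr01 (fun c _ => g' c) gc.
rewrite in_itv /= => /andP[c0 c1].
rewrite /g mulr0 mulr1 scale0r addr0 subr0 mulr1 => ->.
by exists c; rewrite ?ltW // scalerA mulrC [u * c]mulrC.
Qed.

Lemma sum_ord_ltS (F : 'I_n -> R) (k : nat) (kn : (k < n)%N) :
  \sum_(j < n | (j < k.+1)%N) F j = \sum_(j < n | (j < k)%N) F j + F (Ordinal kn).
Proof.
rewrite (bigD1 (Ordinal kn)) ?ltnSn //= addrC; congr (_ + _).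
by apply: eq_bigl => j; rewrite -val_eqE /= ltnS leq_eqVlt; case: ltngtP.
Qed.

Lemma first_order_box (f : V -> R) (p G a b : V) (r kap : R) :
  (forall w j, derivable f w (ebasis R j)) ->
  (forall w, box p r w -> forall j, `|'D_(ebasis R j) f w - G ord0 j| <= kap) ->
  box p r a -> box p r b ->
  `|f b - f a - dotv G (b - a)| <= kap * \sum_(j < n) `|b ord0 j - a ord0 j|.
Proof.
move=> fd Df_near pa pb.
pose z k : V := \row_j (if (j < k)%N then b ord0 j else a ord0 j).
have pz k : box p r (z k) by move=> i; rewrite mxE; case: ifP.
suff est k : (k <= n)%N ->
    `|f (z k) - f a - \sum_(j < n | (j < k)%N) G ord0 j * (b ord0 j - a ord0 j)|
      <= kap * \sum_(j < n | (j < k)%N) `|b ord0 j - a ord0 j|.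
  have zn : z n = b by apply/rowP => j; rewrite mxE ltn_ord.
  have sum_lt_n (F : 'I_n -> R) : \sum_(j < n | (j < n)%N) F j = \sum_(j < n) F j.
    by apply: eq_bigl => j; rewrite ltn_ord.
  have -> : dotv G (b - a) = \sum_(j < n) G ord0 j * (b ord0 j - a ord0 j).
    by apply: eq_bigr => j _; rewrite !mxE.
  by have := est n (leqnn n); rewrite zn !sum_lt_n.
elim: k => [_|k IHk kn].
  have -> : z 0%N = a by apply/rowP => j; rewrite mxE.
  by rewrite !big_pred0 // subrr subr0 normr0 mulr0.
set u := b ord0 (Ordinal kn) - a ord0 (Ordinal kn).
have zS : z k.+1 = z k + u *: ebasis R (Ordinal kn).
  apply/rowP => j; rewrite !mxE -val_eqE /= ltnS leq_eqVlt.
  case: (ltngtP j k) => [||jk]; rewrite ?mulr0 ?addr0 //.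
  have -> : j = Ordinal kn by exact: val_inj.
  by rewrite /u mulr1 addrC subrK.
have [l l01 mvt] := mvt_line u (fun s => fd (z k + s *: _) (Ordinal kn)).
have pxi := box_convex (pz k) (pz k.+1) l01; rewrite zS addrAC subrr add0r in pxi.
rewrite !sum_ord_ltS zS.
set D := 'D_(ebasis R _) f _ in mvt.
have -> : f (z k + u *: ebasis R (Ordinal kn)) - f a
    - (\sum_(j < n | (j < k)%N) G ord0 j * (b ord0 j - a ord0 j)
       + G ord0 (Ordinal kn) * u)
  = (f (z k) - f a - \sum_(j < n | (j < k)%N) G ord0 j * (b ord0 j - a ord0 j))
    + u * (D - G ord0 (Ordinal kn)) by lra.
apply: le_trans (ler_normD _ _) _; rewrite [kap * _]mulrDr.
apply: lerD; first exact/IHk/ltnW.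
by rewrite normrM mulrC ler_wpM2r ?Df_near.
Qed.

End Calculus.

Lemma ivt_sign_change (R : realType) (g : R -> R) (T : R) :
  0 <= T -> continuous g -> g 0 * g T <= 0 -> exists2 t, 0 <= t <= T & g t = 0.
Proof.
move=> T0 gc gT.
have [g00|g0] := eqVneq (g 0) 0; first by exists 0; rewrite ?lexx.
suff : Num.min (g 0) (g T) <= 0 <= Num.max (g 0) (g T).
  by move=> /(IVT T0 (continuous_subspaceT gc)) [t]; rewrite in_itv /=; exists t.
rewrite ge_min le_max; have [g0p|g0n] := ltP 0 (g 0).
  have -> : g T <= 0 by nra.
  by rewrite ltW.
have g0n' : g 0 < 0 by rewrite lt_neqAle g0.
have -> : 0 <= g T by nra.
by rewrite orbT.
Qed.

Section ZeroSet.
Variables (R : realType) (n : nat) (f : 'rV[R]_n -> R).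
Notation V := 'rV[R]_n.
Notation B := (zeroset f).

Lemma zeroset_compact : continuous f ->
  (exists M : R, 0 < M /\ forall x, ~ (enorm x < M) -> 0 < f x) -> compact B.
Proof.
move=> fc [M [_ fM]]; apply: bounded_closed_compact; last first.
  exact: (proj1 (continuous_closedP f) fc _ (@closed_eq R 0)).
exists M; split; first by rewrite num_real.
move=> K MK p /= Bp; apply: le_trans (mx_norm_le_enorm p) _.
apply/ltW/(lt_trans _ MK)/negbNE/negP => /negP pM.
by have := fM p pM; rewrite Bp ltxx.
Qed.

Lemma dist_zero_le (x p : V) : B p -> dist_zero f x <= enorm (x - p).
Proof.
move=> Bp; apply: ge_inf; last by exists p.
by exists 0 => _ [q _ <-]; apply: enorm_ge0.
Qed.

Lemma dist_zero_attained (x : V) : continuous f -> compact B -> B !=set0 ->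
  exists2 p, B p & enorm (x - p) = dist_zero f x.
Proof.
move=> fc Bc B0.
have dc : {within B, continuous (fun p => enorm (x - p))}.
  apply: continuous_subspaceT => p.
  have xB : {for p, continuous (fun p : V => x - p)}.
    by apply: continuousB; [apply: cst_continuous | exact: (fun _ => id)].
  exact: (continuous_comp xB (@enorm_continuous R n (x - p))).
have [p /set_mem Bp pmin] := compact_EVT_min B0 Bc dc.
exists p => //; apply/le_anti; rewrite dist_zero_le // andbT.
apply: lb_le_inf; first by exists (enorm (x - p)), p.
by move=> _ [q Bq <-]; apply/pmin/mem_set.
Qed.

End ZeroSet.

Lemma near_box (R : realType) (n : nat) (P : set 'rV[R]_n) (q : 'rV[R]_n) :
  (\forall w \near q, P w) ->
  \forall q' \near q & r \near 0^'+, box q' r `<=` P.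
Proof.
move=> /nbhs_ballP [rho rho0 qP].
have rho20 : 0 < rho / 2 by rewrite divr_gt0.
exists (ball q (rho / 2), [set r | 0 < r < rho / 2]).
  split; first exact: nbhsx_ballx.
  near=> r; apply/andP; split; near: r; [exact: nbhs_right_gt | exact: nbhs_right_lt].
move=> [q' r] [/= qq' /andP[_ r_lt]] w q'w; apply: qP.
rewrite (ball_box _ rho20) in qq'; rewrite (ball_box _ rho0) => i.
have -> : w ord0 i - q ord0 i = (w ord0 i - q' ord0 i) + (q' ord0 i - q ord0 i) by ring.
by apply: le_lt_trans (ler_normD _ _) _; have := q'w i; have := qq' i; lra.
Unshelve. all: by end_near.
Qed.

Section NearlyConstantGradient.
Variables (R : realType) (n : nat) (f : 'rV[R]_n -> R).
Notation V := 'rV[R]_n.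
Notation D j := ('D_(ebasis R j) f).

Definition grad_nearly_const (kap r : R) (p : V) : Prop :=
  forall y z, box p r y -> box p r z ->
    forall j, `|D j y - D j z| <= kap * enorm (grad f z).

Lemma grad_nearly_const_near (kap : R) (q : V) :
  0 < kap -> kap <= 2 -> (forall j, continuous (D j)) -> grad f q != 0 ->
  \forall q' \near q & r \near 0^'+, grad_nearly_const kap r q'.
Proof.
move=> kap0 kap2 Dc gq.
have [j0 Dj0] : exists j, D j q != 0.
  apply/existsP; move: gq; apply: contraNT; rewrite negb_exists => /forallP Dq0.
  by apply/eqP/rowP => j; rewrite !mxE; apply/eqP/negPn/Dq0.
pose mu := `|D j0 q|; have mu0 : 0 < mu by rewrite normr_gt0.
pose eps := kap * mu / 4; have eps0 : 0 < eps by rewrite divr_gt0 ?mulr_gt0.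
have : \forall w \near q, forall i, `|D i q - D i w| < eps.
  apply: (@filter_forall _ _ (fun i w => `|D i q - D i w| < eps) _ (nbhs_filter q)) => i.
  exact: (cvgr_dist_lt _ _ (Dc i q) _ eps0).
move=> /near_box; apply: filterS => -[q' r] /= close y z /close yq /close zq j.
have Dyz : `|D j y - D j z| <= 2 * eps.
  have -> : D j y - D j z = (D j q - D j z) - (D j q - D j y) by ring.
  by apply: le_trans (ler_normB _ _) _; have := yq j; have := zq j; lra.
have grad_z : mu / 2 <= enorm (grad f z).
  apply: le_trans (coord_le_enorm _ j0); rewrite mxE.
  have := zq j0; have := ler_normD (D j0 q - D j0 z) (D j0 z).
  rewrite subrK -/mu /eps; nra.
apply: le_trans Dyz _; have := ler_wpM2l (ltW kap0) grad_z; rewrite /eps; lra.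
Qed.

Lemma grad_nearly_const_uniform (kap : R) :
  0 < kap -> kap <= 2 -> (forall j, continuous (D j)) -> compact (zeroset f) ->
  (forall p, zeroset f p -> grad f p != 0) ->
  exists2 r, 0 < r & forall p, zeroset f p -> grad_nearly_const kap r p.
Proof.
move=> kap0 kap2 Dc Bc gB.
have /(_ R 0^'+ (grad_nearly_const kap)) cover := (compact_near_coveringP _).1 Bc.
have /cover : forall q, zeroset f q ->
    \forall q' \near q & r \near 0^'+, grad_nearly_const kap r q'.
  by move=> q Bq; apply: grad_nearly_const_near => //; apply: gB.
move=> /(filterI (nbhs_right_gt 0)) /filter_ex [r [r0 Br]].
by exists r.
Qed.

Lemma grad_neq0_near (kap r : R) (p x : V) :
  grad f p != 0 -> grad_nearly_const kap r p -> box p r p -> box p r x ->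
  grad f x != 0.
Proof.
move=> gp pflat pp px; apply: contraNneq gp => gx0.
apply/eqP/rowP => j; rewrite !mxE; apply/eqP; rewrite -normr_le0.
have := pflat p x pp px j; rewrite gx0 enorm0 mulr0.
suff -> : D j x = 0 by rewrite subr0.
by have := congr1 (fun v : V => v ord0 j) gx0; rewrite !mxE.
Qed.

End NearlyConstantGradient.

Section GradRay.
Variables (R : realType) (n : nat) (f : 'rV[R]_n -> R).
Notation V := 'rV[R]_n.
Notation D j := ('D_(ebasis R j) f).

Definition grad_ray (x : V) (t : R) : V :=
  x - (t * Num.sg (f x) / enorm (grad f x)) *: grad f x.

Lemma grad_ray_continuous (x : V) :
  continuous f -> continuous (fun t => f (grad_ray x t)).
Proof.
move=> fc t; apply: (@continuous_comp _ _ _ (grad_ray x) f); last exact: fc.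
apply: continuousB; first exact: cst_continuous.
have -> : (fun t => (t * Num.sg (f x) / enorm (grad f x)) *: grad f x) =
    ( *:%R^~ (grad f x)) \o ( *%R^~ (Num.sg (f x) / enorm (grad f x))).
  by apply: funext => u /=; rewrite mulrA.
by apply: continuous_comp; [apply: mulrr_continuous | apply: scalel_continuous].
Qed.

Lemma enorm_sub_grad_ray (x : V) (t : R) : 0 <= t -> enorm (x - grad_ray x t) <= t.
Proof.
move=> t0; rewrite /grad_ray opprB addrC subrK enormZ !normrM normfV (ger0_norm t0).
rewrite (ger0_norm (enorm_ge0 _)) -!mulrA; apply: ler_piMr => //.
have [->|G0] := eqVneq (enorm (grad f x)) 0; first by rewrite !mulr0.
by rewrite mulVf // mulr1 normr_sg; case: (_ != 0).
Qed.

Lemma grad_ray_sign_change (kap r d : R) (p x : V) :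
  (forall w j, derivable f w (ebasis R j)) -> 0 <= kap -> kap * n%:R <= 1/10 ->
  zeroset f p -> grad_nearly_const f kap r p ->
  enorm (x - p) <= d -> 3 * d < r -> grad f x != 0 ->
  f x * f (grad_ray x (5/4 * d)) <= 0.
Proof.
move=> fd kap0 kapn fp pflat xp dr gx.
have d0 : 0 <= d := le_trans (enorm_ge0 _) xp.
set T := 5/4 * d; set y := grad_ray x T; set G := grad f x; set s := Num.sg (f x).
have [->|fx0] := eqVneq (f x) 0; first by rewrite mul0r.
have ss : s * s = 1 by rewrite -expr2 sqr_sg fx0.
have G0 : 0 < enorm G by rewrite lt0r enorm_eq0 gx enorm_ge0.
have yp i : `|y ord0 i - p ord0 i| <= 9/4 * d.
  apply: le_trans (coord_sub_le_enormD p x y i) _.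
  have : enorm (x - y) <= T by apply: enorm_sub_grad_ray; rewrite /T; lra.
  rewrite /T; lra.
have pp : box p r p by apply: enorm_box; rewrite subrr enorm0; lra.
have px : box p r x by apply: enorm_box; lra.
have py : box p r y by move=> i; have := yp i; lra.
have Dnear w : box p r w -> forall j, `|D j w - G ord0 j| <= kap * enorm G.
  by move=> pw j; rewrite mxE; apply: pflat.
have taylor := first_order_box fd Dnear pp py; rewrite fp subr0 in taylor.
have sum_yp : \sum_(j < n) `|y ord0 j - p ord0 j| <= n%:R * (9/4 * d).
  apply: le_trans (ler_sum _ (fun j _ => yp j)) _.
  by rewrite sumr_const card_ord [in leRHS]mulr_natl.
have dot_y : dotv G (y - p) = dotv G (x - p) - T * s * enorm G.
  rewrite /y /grad_ray -/s -/G addrAC (dotvBr G (x - p)) dotvZr -enorm_sqr.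
  by field; rewrite gt_eqF.
have cs : s * dotv G (x - p) <= enorm G * d.
  rewrite dotvC -dotvZr; apply: le_trans (dotv_le_enorm _ _) _.
  by rewrite enormZ normr_sg fx0 mul1r mulrC ler_wpM2l ?enorm_ge0.
have taylor_s : s * (f y - dotv G (y - p)) <= 9/40 * (enorm G * d).
  apply: le_trans (ler_norm _) _; rewrite normrM normr_sg fx0 mul1r.
  apply: le_trans taylor _; apply: le_trans (ler_wpM2l _ sum_yp) _.
    by rewrite mulr_ge0 ?enorm_ge0.
  have : kap * n%:R * (enorm G * d) <= 1/10 * (enorm G * d).
    by rewrite ler_wpM2r ?mulr_ge0 ?enorm_ge0.
  lra.
have sfy : s * f y <= 0.
  have -> : s * f y = s * (f y - dotv G (y - p)) + s * dotv G (x - p)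
                      - T * (s * s) * enorm G.
    by rewrite dot_y; ring.
  rewrite ss /T; nra.
by rewrite [f x]numEsg mulrAC mulrC pmulr_rle0 ?normr_gt0.
Qed.

Lemma near_zeroset_Tset_le (kap r : R) (x : V) :
  continuous f -> (forall w j, derivable f w (ebasis R j)) ->
  0 <= kap -> kap * n%:R <= 1/10 -> compact (zeroset f) -> zeroset f !=set0 ->
  (forall p, zeroset f p -> grad f p != 0) ->
  (forall p, zeroset f p -> grad_nearly_const f kap r p) ->
  3 * dist_zero f x < r ->
  grad f x != 0 /\ exists2 t, Tset f x t & t <= 5/4 * dist_zero f x.
Proof.
move=> fc fd kap0 kapn Bc B0 gB flat dr.
have [p Bp xp] := dist_zero_attained x fc Bc B0.
have d0 : 0 <= dist_zero f x by rewrite -xp enorm_ge0.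
have xp_le : enorm (x - p) <= dist_zero f x by rewrite xp.
have px : box p r x by apply: enorm_box; lra.
have pp : box p r p by apply: enorm_box; rewrite subrr enorm0; lra.
have gx := grad_neq0_near (gB p Bp) (flat p Bp) pp px.
have [t /andP[t0 tT] ft] :
    exists2 t, 0 <= t <= 5/4 * dist_zero f x & f (grad_ray x t) = 0.
  apply: ivt_sign_change; [lra | exact: grad_ray_continuous |].
  rewrite /grad_ray !mul0r scale0r subr0.
  exact: grad_ray_sign_change (flat p Bp) xp_le dr gx.
by split=> //; exists t.
Qed.

Lemma Tset_closed (x : V) : continuous f -> closed (Tset f x).
Proof.
move=> fc.
have -> : Tset f x =
  [set t | 0 <= t] `&` (fun t => f (grad_ray x t)) @^-1` [set y | y = 0] by [].
apply: closedI; first exact: closed_ge.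
by apply: (continuous_closedP _).1; [apply: grad_ray_continuous | apply: closed_eq].
Qed.

Lemma Tset_inf (x : V) : continuous f -> Tset f x !=set0 ->
  Tset f x (inf (Tset f x)) /\ forall t, Tset f x t -> inf (Tset f x) <= t.
Proof.
move=> fc T0; have Tlb : has_lbound (Tset f x) by exists 0 => t [].
split; last exact: ge_inf.
apply: (itv_closed_infimums T0 (Tset_closed fc)); split; first exact: ge_inf.
by move=> t; apply: lb_le_inf.
Qed.

Lemma dist_zero_le_Tset (x : V) (t : R) : Tset f x t -> dist_zero f x <= t.
Proof.
by move=> [t0 Bt]; apply: le_trans (dist_zero_le x Bt) (enorm_sub_grad_ray x t0).
Qed.

End GradRay.

Lemma cos_ge_five_eighths (R : realType) (alpha : R) :
  - (pi / 4) < alpha < pi / 4 -> 5/8 <= cos alpha.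
Proof.
move=> /andP[a1 a2]; have pi0 := pi_gt0 R.
have cos2a : 0 < cos (alpha + alpha) by apply: cos_gt0_pihalf; apply/andP; split; lra.
have cosa : 0 < cos alpha by apply: cos_gt0_pihalf; apply/andP; split; lra.
move: cos2a; rewrite cosD -!expr2 sin2cos2; nra.
Qed.

Theorem theorem2 (R : realType) (n : nat) (f : 'rV[R]_n -> R) :
  smooth f ->
  (exists M : R, 0 < M /\ forall x, ~ (enorm x < M) -> 0 < f x) ->
  (forall p, zeroset f p -> grad f p != 0) ->
  zeroset f !=set0 ->
  forall alpha : R, - (pi / 4) < alpha < pi / 4 ->
  exists sigma : R, 0 < sigma /\
    forall x, Omega f sigma x ->
      grad f x != 0 /\
      exists tx : R, Tset f x tx /\ (forall t, Tset f x t -> tx <= t) /\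
        dist_zero f x <= tx /\ tx <= 2 * cos alpha * dist_zero f x.
Proof.
move=> fs fM gB B0 alpha alpha_bd.
have fc : continuous f := (fs [::]).1.
have fd w j : derivable f w (ebasis R j) := (fs [::]).2 j w.
have Dc j : continuous ('D_(ebasis R j) f) := (fs [:: j]).1.
have Bc := zeroset_compact fc fM.
pose kap : R := (10 * n.+1%:R)^-1.
have kap0 : 0 < kap by rewrite invr_gt0 mulr_gt0 ?ltr0Sn.
have kapN : kap * n.+1%:R = 1/10.
  by rewrite /kap; field; apply: lt0r_neq0; have := ler0n R n; lra.
have kapn : kap * n%:R <= 1/10 by rewrite -kapN ler_wpM2l ?ler_nat ?ltW.
have kap2 : kap <= 2.
  have : 1 <= n.+1%:R :> R by rewrite ler1n.
  nra.
have [r r0 flat] := grad_nearly_const_uniform kap0 kap2 Dc Bc gB.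
exists (r / 3); split => [|x xO]; first by rewrite divr_gt0.
have dr : 3 * dist_zero f x < r by move: xO; rewrite /Omega /=; lra.
have [gx [t Tt tle]] := near_zeroset_Tset_le fc fd (ltW kap0) kapn Bc B0 gB flat dr.
have [Tinf Tmin] := Tset_inf fc (ex_intro _ t Tt).
split => //; exists (inf (Tset f x)); do !split => //; first exact: dist_zero_le_Tset.
have := dist_zero_le_Tset Tt; have := cos_ge_five_eighths alpha_bd.
have := Tmin t Tt; nra.
Qed.
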